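(* The forgetful functor $U\colon \mathbf{Lens}\to\mathbf{Cat}$ preserves and reflects monomorphisms: a lens $M$ is a monomorphism in $\mathbf{Lens}$ if and only if its get functor $UM$ is a monomorphism in $\mathbf{Cat}$.
   Context: $\mathbf{Cat}$ is the category of small categories and functors. A lens $F\colon \mathbf{A}\to\mathbf{B}$ between small categories consists of a functor $F\colon\mathbf{A}\to\mathbf{B}$ (the get functor) together with, for each object $A$ of $\mathbf{A}$, a function $\varphi_{F,A}$ from the set of morphisms of $\mathbf{B}$ with domain $FA$ to the set of morphisms of $\mathbf{A}$ with domain $A$ (the put functions), such that: $F(\varphi_{F,A}b)=b$; $\varphi_{F,A}(\mathrm{id}_{FA})=\mathrm{id}_A$; and $\varphi_{F,A}(b'\circ b)=\varphi_{F,A'}(b')\circ\varphi_{F,A}(b)$ whenever $b$ has domain $FA$, $A'$ is the codomain of $\varphi_{F,A}b$, and $b'$ has domain $FA'$. $\mathbf{Lens}$ is the category of small categories and lenses; the composite of $F\colon\mathbf{A}\to\mathbf{B}$ and $G\colon\mathbf{B}\to\mathbf{C}$ has get functor $G\circ F$ and put functions $\varphi_{G\circ F,A}(c)=\varphi_{F,A}(\varphi_{G,FA}(c))$. $U\colon\mathbf{Lens}\to\mathbf{Cat}$ is the identity-on-objects functor sending a lens to its get functor. *)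

From Stdlib Require Import Utf8.

Set Implicit Arguments.

(** Small categories, single-sorted presentation: a type of objects, a type
    of morphisms, domain/codomain maps, identities, and a composition
    [comp g f] (= g ∘ f), whose value is only constrained when
    [cod f = dom g]. *)
Record Cat := {
  Ob : Type;
  Mor : Type;
  dom : Mor -> Ob;
  cod : Mor -> Ob;
  idm : Ob -> Mor;
  comp : Mor -> Mor -> Mor;
  dom_id : forall x, dom (idm x) = x;
  cod_id : forall x, cod (idm x) = x;
  dom_comp : forall f g, cod f = dom g -> dom (comp g f) = dom f;
  cod_comp : forall f g, cod f = dom g -> cod (comp g f) = cod g;
  comp_id_r : forall f, comp f (idm (dom f)) = f;
  comp_id_l : forall f, comp (idm (cod f)) f = f;
  comp_assoc : forall f g h, cod f = dom g -> cod g = dom h ->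
    comp h (comp g f) = comp (comp h g) f
}.

Arguments dom {c} _.
Arguments cod {c} _.
Arguments idm {c} _.
Arguments comp {c} _ _.

Record Functor (A B : Cat) := {
  fo : Ob A -> Ob B;
  fm : Mor A -> Mor B;
  fm_dom : forall f, dom (fm f) = fo (dom f);
  fm_cod : forall f, cod (fm f) = fo (cod f);
  fm_id : forall x, fm (idm x) = idm (fo x);
  fm_comp : forall f g, cod f = dom g -> fm (comp g f) = comp (fm g) (fm f)
}.

Arguments fo {A B} _ _.
Arguments fm {A B} _ _.

Definition functor_eq (A B : Cat) (F G : Functor A B) : Prop :=
  (forall x, fo F x = fo G x) /\ (forall f, fm F f = fm G f).

Definition fcomp (A B C : Cat) (G : Functor B C) (F : Functor A B) : Functor A C.
Proof.
  refine {| fo := fun x => fo G (fo F x); fm := fun f => fm G (fm F f) |}.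
  - intro f. rewrite fm_dom, fm_dom. reflexivity.
  - intro f. rewrite fm_cod, fm_cod. reflexivity.
  - intro x. rewrite fm_id, fm_id. reflexivity.
  - intros f g H. rewrite fm_comp by exact H.
    apply fm_comp. rewrite fm_cod, fm_dom, H. reflexivity.
Defined.

(** Lenses.  The put function [put x b] is only meaningful (and only
    constrained) when [dom b = fo get x]; its value elsewhere is junk and is
    ignored by [lens_eq]. *)
Record Lens (A B : Cat) := {
  get : Functor A B;
  put : Ob A -> Mor B -> Mor A;
  put_dom : forall x b, dom b = fo get x -> dom (put x b) = x;
  put_get : forall x b, dom b = fo get x -> fm get (put x b) = b;
  put_id : forall x, put x (idm (fo get x)) = idm x;
  put_comp : forall x b b', dom b = fo get x ->
    dom b' = fo get (cod (put x b)) ->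
    put x (comp b' b) = comp (put (cod (put x b)) b') (put x b)
}.

Arguments get {A B} _.
Arguments put {A B} _ _ _.

Definition lens_eq (A B : Cat) (L K : Lens A B) : Prop :=
  functor_eq (get L) (get K) /\
  (forall x b, dom b = fo (get L) x -> put L x b = put K x b).

Definition lcomp (A B C : Cat) (G : Lens B C) (F : Lens A B) : Lens A C.
Proof.
  refine {| get := fcomp (get G) (get F);
            put := fun x c => put F x (put G (fo (get F) x) c) |}.
  - intros x c H. apply put_dom. apply put_dom. exact H.
  - intros x c H. simpl. rewrite put_get. 2: apply put_dom; exact H.
    apply put_get. exact H.
  - intro x. simpl. rewrite put_id. apply put_id.
  - intros x c c' H H'. simpl in *.
    assert (HG : dom (put G (fo (get F) x) c) = fo (get F) x)
      by (apply put_dom; exact H).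
    assert (Hc : cod (put G (fo (get F) x) c)
                 = fo (get F) (cod (put F x (put G (fo (get F) x) c)))).
    { transitivity (cod (fm (get F) (put F x (put G (fo (get F) x) c)))).
      - rewrite (put_get F x _ HG). reflexivity.
      - apply fm_cod. }
    rewrite (put_comp G (fo (get F) x) c c' H) by (rewrite Hc; exact H').
    rewrite Hc. apply put_comp.
    + exact HG.
    + apply put_dom. exact H'.
Defined.

Definition mono_Cat (A B : Cat) (F : Functor A B) : Prop :=
  forall (X : Cat) (G H : Functor X A),
    functor_eq (fcomp F G) (fcomp F H) -> functor_eq G H.

Definition mono_Lens (A B : Cat) (M : Lens A B) : Prop :=
  forall (X : Cat) (G H : Lens X A),
    lens_eq (lcomp M G) (lcomp M H) -> lens_eq G H.

Definition U (A B : Cat) (M : Lens A B) : Functor A B := get M.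

From Stdlib Require Import ProofIrrelevance ClassicalEpsilon.

(** A functor is monic in [Cat] iff the two projections of its kernel pair
    coincide, i.e. iff it is injective on objects and on morphisms.  Lenses
    pull back along functors and the pullback is symmetric, so both kernel
    pair projections of [get M] underlie lenses, and their composites with
    [M] agree; if [M] is monic in [Lens] the two lenses are equal, hence
    [get M] is injective.  Conversely, if [get M] is injective on morphisms
    then φ_M(M d) = d, as both sides have image M d; so the put functions of
    a lens [G] are recovered from those of [M ∘ G], namely φ_G ∘ φ_M. *)

Section Pullback.
Context {A B C : Cat} {F : Functor A B} {G : Functor C B}.

Record pb_ob := PbOb {
  pb_ob1 : Ob A;
  pb_ob2 : Ob C;
  pb_obE : fo F pb_ob1 = fo G pb_ob2
}.

Record pb_mor := PbMor {
  pb_mor1 : Mor A;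
  pb_mor2 : Mor C;
  pb_morE : fm F pb_mor1 = fm G pb_mor2
}.

Lemma pb_ob_ext (x y : pb_ob) :
  pb_ob1 x = pb_ob1 y -> pb_ob2 x = pb_ob2 y -> x = y.
Proof.
  destruct x, y; simpl; intros <- <-.
  f_equal; apply proof_irrelevance.
Qed.

Lemma pb_mor_ext (f g : pb_mor) :
  pb_mor1 f = pb_mor1 g -> pb_mor2 f = pb_mor2 g -> f = g.
Proof.
  destruct f, g; simpl; intros <- <-.
  f_equal; apply proof_irrelevance.
Qed.

Definition pb_dom (f : pb_mor) : pb_ob.
Proof.
  refine (PbOb (dom (pb_mor1 f)) (dom (pb_mor2 f)) _).
  rewrite <- fm_dom, <- fm_dom; f_equal; apply pb_morE.
Defined.

Definition pb_cod (f : pb_mor) : pb_ob.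
Proof.
  refine (PbOb (cod (pb_mor1 f)) (cod (pb_mor2 f)) _).
  rewrite <- fm_cod, <- fm_cod; f_equal; apply pb_morE.
Defined.

Definition pb_id (x : pb_ob) : pb_mor.
Proof.
  refine (PbMor (idm (pb_ob1 x)) (idm (pb_ob2 x)) _).
  rewrite fm_id, fm_id; f_equal; apply pb_obE.
Defined.

Definition pb_composable (g f : pb_mor) : Prop :=
  cod (pb_mor1 f) = dom (pb_mor1 g) /\ cod (pb_mor2 f) = dom (pb_mor2 g).

Lemma pb_cod_dom_composable {g f : pb_mor} : pb_cod f = pb_dom g -> pb_composable g f.
Proof. intro H; split; [exact (f_equal pb_ob1 H) | exact (f_equal pb_ob2 H)]. Qed.

Lemma pb_comp_morE (g f : pb_mor) : pb_composable g f ->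
  fm F (comp (pb_mor1 g) (pb_mor1 f)) = fm G (comp (pb_mor2 g) (pb_mor2 f)).
Proof.
  intros [H1 H2]; rewrite fm_comp, fm_comp by assumption.
  f_equal; apply pb_morE.
Qed.

(* The componentwise composite of a non-composable pair need not lie in the
   pullback, so some junk value ([f]) is returned there instead. *)
Definition pb_comp (g f : pb_mor) : pb_mor :=
  match excluded_middle_informative (pb_composable g f) with
  | left H => PbMor _ _ (pb_comp_morE g f H)
  | right _ => f
  end.

Lemma pb_comp1 (f g : pb_mor) : pb_cod f = pb_dom g ->
  pb_mor1 (pb_comp g f) = comp (pb_mor1 g) (pb_mor1 f).
Proof.
  intro H; unfold pb_comp.
  destruct excluded_middle_informative as [e | n]; [reflexivity |].
  exfalso; exact (n (pb_cod_dom_composable H)).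
Qed.

Lemma pb_comp2 (f g : pb_mor) : pb_cod f = pb_dom g ->
  pb_mor2 (pb_comp g f) = comp (pb_mor2 g) (pb_mor2 f).
Proof.
  intro H; unfold pb_comp.
  destruct excluded_middle_informative as [e | n]; [reflexivity |].
  exfalso; exact (n (pb_cod_dom_composable H)).
Qed.

Lemma pb_dom_id (x : pb_ob) : pb_dom (pb_id x) = x.
Proof. apply pb_ob_ext; apply dom_id. Qed.

Lemma pb_cod_id (x : pb_ob) : pb_cod (pb_id x) = x.
Proof. apply pb_ob_ext; apply cod_id. Qed.

Lemma pb_dom_comp (f g : pb_mor) : pb_cod f = pb_dom g ->
  pb_dom (pb_comp g f) = pb_dom f.
Proof.
  intro H; destruct (pb_cod_dom_composable H) as [H1 H2].
  apply pb_ob_ext; simpl; [rewrite pb_comp1 | rewrite pb_comp2];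
    auto using dom_comp.
Qed.

Lemma pb_cod_comp (f g : pb_mor) : pb_cod f = pb_dom g ->
  pb_cod (pb_comp g f) = pb_cod g.
Proof.
  intro H; destruct (pb_cod_dom_composable H) as [H1 H2].
  apply pb_ob_ext; simpl; [rewrite pb_comp1 | rewrite pb_comp2];
    auto using cod_comp.
Qed.

Definition pullback : Cat.
Proof.
  refine {| Ob := pb_ob; Mor := pb_mor; dom := pb_dom; cod := pb_cod;
            idm := pb_id; comp := pb_comp;
            dom_id := pb_dom_id; cod_id := pb_cod_id;
            dom_comp := pb_dom_comp; cod_comp := pb_cod_comp |}.
  - intro f; assert (H : pb_cod (pb_id (pb_dom f)) = pb_dom f) by apply pb_cod_id.
    apply pb_mor_ext; rewrite ?pb_comp1, ?pb_comp2 by exact H; apply comp_id_r.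
  - intro f; assert (H : pb_cod f = pb_dom (pb_id (pb_cod f)))
      by (symmetry; apply pb_dom_id).
    apply pb_mor_ext; rewrite ?pb_comp1, ?pb_comp2 by exact H; apply comp_id_l.
  - intros f g h Hfg Hgh.
    assert (Hfgh : pb_cod (pb_comp g f) = pb_dom h) by (rewrite pb_cod_comp; auto).
    assert (Hfhg : pb_cod f = pb_dom (pb_comp h g)) by (rewrite pb_dom_comp; auto).
    destruct (pb_cod_dom_composable Hfg), (pb_cod_dom_composable Hgh).
    apply pb_mor_ext; rewrite ?pb_comp1, ?pb_comp2 by assumption;
      apply comp_assoc; assumption.
Defined.

Definition pb_fst : Functor pullback A.
Proof.
  refine {| fo := pb_ob1 : Ob pullback -> Ob A; fm := pb_mor1 : Mor pullback -> Mor A |};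
    try reflexivity.
  exact pb_comp1.
Defined.

Definition pb_snd : Functor pullback C.
Proof.
  refine {| fo := pb_ob2 : Ob pullback -> Ob C; fm := pb_mor2 : Mor pullback -> Mor C |};
    try reflexivity.
  exact pb_comp2.
Defined.

Lemma pb_square : functor_eq (fcomp F pb_fst) (fcomp G pb_snd).
Proof. split; [exact pb_obE | exact pb_morE]. Qed.

End Pullback.

Arguments pb_ob {A B C} F G.
Arguments pb_mor {A B C} F G.
Arguments pullback {A B C} F G.
Arguments pb_fst {A B C} F G.
Arguments pb_snd {A B C} F G.
Arguments pb_square {A B C} F G.

Lemma mono_Cat_iff_kernel_pair {A B : Cat} (F : Functor A B) :
  mono_Cat F <-> functor_eq (pb_fst F F) (pb_snd F F).
Proof.
  split.
  - intro HF; exact (HF _ _ _ (pb_square F F)).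
  - intros [Hob Hmor] X G H [Eob Emor]; split.
    + intro x; exact (Hob (PbOb (fo G x) (fo H x) (Eob x))).
    + intro f; exact (Hmor (PbMor (fm G f) (fm H f) (Emor f))).
Qed.

Lemma mono_Cat_fm_inj {A B : Cat} {F : Functor A B} : mono_Cat F ->
  forall f f', fm F f = fm F f' -> f = f'.
Proof.
  intros HF f f' e.
  exact (proj2 (proj1 (mono_Cat_iff_kernel_pair F) HF) (PbMor f f' e)).
Qed.

Section IsoLens.
Context {A B : Cat} (F : Functor A B) (G : Functor B A).
Hypotheses (GF_ob : forall x, fo G (fo F x) = x)
           (FG_ob : forall y, fo F (fo G y) = y)
           (FG_mor : forall b, fm F (fm G b) = b).

Definition iso_lens : Lens A B.
Proof.
  refine {| get := F; put := fun _ b => fm G b |}.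
  - intros x b H; rewrite fm_dom, H; apply GF_ob.
  - intros x b _; apply FG_mor.
  - intro x; rewrite fm_id; f_equal; apply GF_ob.
  - intros x b b' H H'; apply fm_comp.
    rewrite H', fm_cod, FG_ob; reflexivity.
Defined.

End IsoLens.

Section PullbackSwap.
Context {A B C : Cat} (F : Functor A B) (G : Functor C B).

Definition pb_swap_ob (x : pb_ob F G) : pb_ob G F :=
  PbOb (pb_ob2 x) (pb_ob1 x) (eq_sym (pb_obE x)).

Definition pb_swap_mor (f : pb_mor F G) : pb_mor G F :=
  PbMor (pb_mor2 f) (pb_mor1 f) (eq_sym (pb_morE f)).

Definition pb_swap : Functor (pullback F G) (pullback G F).
Proof.
  refine {| fo := pb_swap_ob : Ob (pullback F G) -> Ob (pullback G F);
            fm := pb_swap_mor : Mor (pullback F G) -> Mor (pullback G F) |}.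
  - intro f; apply pb_ob_ext; reflexivity.
  - intro f; apply pb_ob_ext; reflexivity.
  - intro x; apply pb_mor_ext; reflexivity.
  - intros f g H.
    assert (H' : pb_cod (pb_swap_mor f) = pb_dom (pb_swap_mor g))
      by (apply pb_ob_ext; [exact (f_equal pb_ob2 H) | exact (f_equal pb_ob1 H)]).
    apply pb_mor_ext; simpl; rewrite ?pb_comp1, ?pb_comp2 by assumption; reflexivity.
Defined.

End PullbackSwap.

Definition pb_swap_lens {A B C : Cat} (F : Functor A B) (G : Functor C B) :
  Lens (pullback F G) (pullback G F).
Proof.
  refine (iso_lens (pb_swap F G) (pb_swap G F) _ _ _);
    intro; [apply pb_ob_ext .. | apply pb_mor_ext]; reflexivity.
Defined.

Section PullbackLens.
Context {A B C : Cat} (F : Functor A B) (M : Lens C B).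

Lemma pb_lift_domE (x : pb_ob F (get M)) (h : Mor A) :
  dom h = pb_ob1 x -> dom (fm F h) = fo (get M) (pb_ob2 x).
Proof. intro H; rewrite fm_dom, H; apply pb_obE. Qed.

Lemma pb_lift_morE (x : pb_ob F (get M)) (h : Mor A) (H : dom h = pb_ob1 x) :
  fm F h = fm (get M) (put M (pb_ob2 x) (fm F h)).
Proof. symmetry; apply put_get, pb_lift_domE, H. Qed.

Definition pb_lift (x : pb_ob F (get M)) (h : Mor A) : pb_mor F (get M) :=
  match excluded_middle_informative (dom h = pb_ob1 x) with
  | left H => PbMor h (put M (pb_ob2 x) (fm F h)) (pb_lift_morE x h H)
  | right _ => pb_id x
  end.

Lemma pb_lift1 (x : pb_ob F (get M)) (h : Mor A) :
  dom h = pb_ob1 x -> pb_mor1 (pb_lift x h) = h.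
Proof.
  intro H; unfold pb_lift.
  destruct excluded_middle_informative as [e | n]; [reflexivity | contradiction].
Qed.

Lemma pb_lift2 (x : pb_ob F (get M)) (h : Mor A) :
  dom h = pb_ob1 x -> pb_mor2 (pb_lift x h) = put M (pb_ob2 x) (fm F h).
Proof.
  intro H; unfold pb_lift.
  destruct excluded_middle_informative as [e | n]; [reflexivity | contradiction].
Qed.

Lemma pb_lift_dom (x : pb_ob F (get M)) (h : Mor A) :
  dom h = pb_ob1 x -> pb_dom (pb_lift x h) = x.
Proof.
  intro H; apply pb_ob_ext; simpl.
  - rewrite pb_lift1; assumption.
  - rewrite pb_lift2 by assumption; apply put_dom, pb_lift_domE, H.
Qed.

Definition pb_lens : Lens (pullback F (get M)) A.
Proof.
  refine {| get := pb_fst F (get M); put := pb_lift; put_dom := pb_lift_dom;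
            put_get := pb_lift1 |}.
  - intro x; apply pb_mor_ext; simpl.
    + apply pb_lift1, dom_id.
    + rewrite pb_lift2 by apply dom_id.
      rewrite fm_id, pb_obE; apply put_id.
  - intros x b b' H H'; simpl in H, H'.
    assert (Hy : pb_cod (pb_lift x b) = pb_dom (pb_lift (pb_cod (pb_lift x b)) b'))
      by (symmetry; apply pb_lift_dom, H').
    assert (Hbb' : cod b = dom b') by (rewrite H', pb_lift1 by exact H; reflexivity).
    assert (Hcomp : dom (comp b' b) = pb_ob1 x) by (rewrite dom_comp; assumption).
    apply pb_mor_ext; simpl; rewrite ?pb_comp1, ?pb_comp2 by exact Hy.
    + rewrite !pb_lift1 by assumption; reflexivity.
    + assert (Ey : pb_ob2 (pb_cod (pb_lift x b)) = cod (put M (pb_ob2 x) (fm F b)))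
        by (simpl; rewrite pb_lift2 by exact H; reflexivity).
      pose proof (pb_lift_domE (pb_cod (pb_lift x b)) b' H') as Hb'; rewrite Ey in Hb'.
      rewrite !pb_lift2, Ey, fm_comp by assumption.
      apply put_comp; [apply pb_lift_domE, H | exact Hb'].
Defined.

End PullbackLens.

Section KernelPairLenses.
Context {A B : Cat} (M : Lens A B).

Definition kp_lens1 : Lens (pullback (get M) (get M)) A := pb_lens (get M) M.

(* Its get functor is [pb_snd (get M) (get M)] up to conversion. *)
Definition kp_lens2 : Lens (pullback (get M) (get M)) A :=
  lcomp kp_lens1 (pb_swap_lens (get M) (get M)).

Lemma kp_lenses_equalized : lens_eq (lcomp M kp_lens1) (lcomp M kp_lens2).
Proof.
  split; [exact (pb_square (get M) (get M)) |].
  intros x c Hc; simpl in *.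
  assert (Hc' : dom c = fo (get M) (pb_ob2 x)) by (rewrite Hc; apply pb_obE).
  apply pb_mor_ext; simpl;
    rewrite ?pb_lift1, ?pb_lift2, ?put_get
      by first [assumption | apply put_dom; assumption];
    reflexivity.
Qed.

End KernelPairLenses.

Lemma mono_Cat_of_mono_Lens {A B : Cat} (M : Lens A B) :
  mono_Lens M -> mono_Cat (get M).
Proof.
  intro HM; apply mono_Cat_iff_kernel_pair.
  exact (proj1 (HM _ _ _ (kp_lenses_equalized M))).
Qed.

Lemma put_fm_of_fm_inj {A B : Cat} (M : Lens A B) :
  (forall f f', fm (get M) f = fm (get M) f' -> f = f') ->
  forall d, put M (dom d) (fm (get M) d) = d.
Proof.
  intros Hinj d; apply Hinj, put_get, fm_dom.
Qed.

Lemma mono_Lens_of_mono_Cat {A B : Cat} (M : Lens A B) :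
  mono_Cat (get M) -> mono_Lens M.
Proof.
  intros HM X G H [Eget Eput].
  assert (EGH : functor_eq (get G) (get H)) by exact (HM _ _ _ Eget).
  split; [exact EGH |].
  intros x b Hb.
  pose proof (put_fm_of_fm_inj M (mono_Cat_fm_inj HM) b) as Kb.
  transitivity (put G x (put M (fo (get G) x) (fm (get M) b))).
  { rewrite <- Hb, Kb; reflexivity. }
  transitivity (put H x (put M (fo (get H) x) (fm (get M) b))).
  { apply (Eput x); simpl; rewrite fm_dom, Hb; reflexivity. }
  rewrite <- (proj1 EGH x), <- Hb, Kb; reflexivity.
Qed.

Theorem theorem3p1 : forall (A B : Cat) (M : Lens A B),
  mono_Lens M <-> mono_Cat (U M).
Proof.
  intros A B M; split; [apply mono_Cat_of_mono_Lens | apply mono_Lens_of_mono_Cat].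
Qed.
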